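(* Let $(Y,\lambda)\in\{-1,1\}\times\{-1,1\}^m$ follow the Ising model $$P(Y,\lambda)=\frac1Z\exp\Big(\theta_Y Y+\sum_i\theta_i\lambda_iY+\sum_{(i,j)\in E_\lambda}\theta_{ij}\lambda_i\lambda_j\Big),$$ where $E_\lambda$ is a set of unordered pairs of distinct sources. Then for every source $i$, with $a_i=\mathbb E[\lambda_iY]$, $$P(\lambda_i=1\mid Y=1)=P(\lambda_i=-1\mid Y=-1)=\frac{1+a_i}{2},\qquad P(\lambda_i=-1\mid Y=1)=P(\lambda_i=1\mid Y=-1)=\frac{1-a_i}{2}.$$
   Context: $Z$ is the normalizing constant. *)

From HB Require Import structures.
From mathcomp Require Import all_boot all_order all_algebra.
From mathcomp Require Import all_classical all_reals all_analysis.
Set Implicit Arguments. Unset Strict Implicit. Unset Printing Implicit Defensive.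
Import Order.TTheory GRing.Theory Num.Theory.
Local Open Scope ring_scope.

Definition spin {R : realType} (b : bool) : R := if b then 1 else -1.

(* A configuration (Y, lambda) in {-1,1} x {-1,1}^m. *)
Definition config (m : nat) := (bool * {ffun 'I_m -> bool})%type.

Section Ising.
Variables (R : realType) (m : nat).
(* Parameters: thY = theta_Y, th i = theta_i, thE i j = theta_ij,
   E = edge set; each unordered pair {i,j} represented as (i,j) with i < j. *)
Variables (thY : R) (th : 'I_m -> R) (thE : 'I_m -> 'I_m -> R)
          (E : {set 'I_m * 'I_m}).

Definition ising_weight (c : config m) : R :=
  expR (thY * spin c.1
        + \sum_(i < m) th i * spin (c.2 i) * spin c.1
        + \sum_(e in E) thE e.1 e.2 * spin (c.2 e.1) * spin (c.2 e.2)).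

Definition ising_Z : R := \sum_(c : config m) ising_weight c.

Definition ising_P (c : config m) : R := ising_weight c / ising_Z.

Definition ising_Prob (A : pred (config m)) : R :=
  \sum_(c : config m | A c) ising_P c.

Definition cond_lam_given_Y (i : 'I_m) (b y : bool) : R :=
  ising_Prob (fun c => (c.2 i == b) && (c.1 == y)) /
  ising_Prob (fun c => c.1 == y).

Definition accuracy (i : 'I_m) : R :=
  \sum_(c : config m) ising_P c * (spin (c.2 i) * spin c.1).
End Ising.

From HB Require Import structures.
From mathcomp Require Import all_boot all_order all_algebra.
From mathcomp Require Import all_classical all_reals all_analysis.
From mathcomp Require Import ring.
Import Order.TTheory GRing.Theory Num.Theory.
Local Open Scope ring_scope.

(* The energy is invariant under the global flip (Y, lambda) |-> (-Y, -lambda),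
   except for the term theta_Y Y, which depends on Y alone.  Hence, given
   Y = -1, lambda is distributed as -lambda given Y = 1, so that
   p := P(lambda_i = Y | Y = y) does not depend on y.  Conditioning on Y then
   gives a_i = E[lambda_i Y] = p - (1 - p) = 2p - 1.  Nothing is assumed about
   the edge set. *)

Lemma spinN {R : realType} (b : bool) : spin (~~ b) = - spin b :> R.
Proof. by case: b; rewrite /spin ?opprK. Qed.

Definition flip_config {m : nat} (c : config m) : config m :=
  (~~ c.1, [ffun j => ~~ c.2 j]).

Lemma flip_configK {m : nat} : involutive (@flip_config m).
Proof.
move=> [y l]; congr (_, _); first exact: negbK.
by apply/ffunP => j; rewrite !ffunE negbK.
Qed.

Section IsingFlipSymmetry.
Variables (R : realType) (m : nat) (thY : R) (th : 'I_m -> R)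
          (thE : 'I_m -> 'I_m -> R) (E : {set 'I_m * 'I_m}) (i : 'I_m).

Local Notation w := (ising_weight thY th thE E).
Local Notation Z := (ising_Z thY th thE E).
Local Notation cond := (cond_lam_given_Y thY th thE E i).

Lemma ising_weight_flip c :
  w (flip_config c) = expR (- (2 * thY * spin c.1)) * w c.
Proof.
rewrite /ising_weight -expRD /= spinN; congr expR.
have -> : \sum_(j < m) th j * spin ([ffun j => ~~ c.2 j] j) * - spin c.1
          = \sum_(j < m) th j * spin (c.2 j) * spin c.1.
  by apply: eq_bigr => j _; rewrite ffunE spinN; ring.
have -> : \sum_(e in E) thE e.1 e.2 * spin ([ffun j => ~~ c.2 j] e.1)
                                   * spin ([ffun j => ~~ c.2 j] e.2)
          = \sum_(e in E) thE e.1 e.2 * spin (c.2 e.1) * spin (c.2 e.2).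
  by apply: eq_bigr => e _; rewrite !ffunE !spinN; ring.
ring.
Qed.

Definition ising_mass (A : pred (config m)) : R := \sum_(c | A c) w c.

Lemma ising_ProbE A : ising_Prob thY th thE E A = ising_mass A / Z.
Proof. by rewrite /ising_Prob /ising_mass mulr_suml. Qed.

Definition joint_mass (y b : bool) : R :=
  ising_mass (fun c => (c.2 i == b) && (c.1 == y)).

Lemma joint_mass_gt0 y b : 0 < joint_mass y b.
Proof.
rewrite /joint_mass /ising_mass (bigD1 (y, [ffun=> b])) /= ?ffunE ?eqxx //.
rewrite ltr_pwDl ?expR_gt0 // sumr_ge0 // => c _.
exact/ltW/expR_gt0.
Qed.

Lemma joint_mass_flip y b :
  joint_mass (~~ y) (~~ b) = expR (- (2 * thY * spin y)) * joint_mass y b.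
Proof.
rewrite /joint_mass /ising_mass (reindex_inj (inv_inj flip_configK)) /=.
rewrite mulr_sumr; apply: eq_big => [c | c /andP[_ /eqP yc]].
  by rewrite ffunE !eqb_negLR !negbK.
by rewrite ising_weight_flip (negb_inj yc).
Qed.

Lemma sum_config_split (F : config m -> R) :
  \sum_c F c = \sum_(y : bool) \sum_(b : bool)
                 \sum_(c : config m | (c.2 i == b) && (c.1 == y)) F c.
Proof.
rewrite (partition_big (fun c : config m => c.1) predT) //; apply: eq_bigr => y _.
rewrite (partition_big (fun c : config m => c.2 i) predT) //; apply: eq_bigr => b _.
by apply: eq_bigl => c; rewrite andbC.
Qed.

Lemma ising_ZE : Z = joint_mass true true + joint_mass true false
                     + joint_mass false true + joint_mass false false.
Proof. by rewrite /ising_Z sum_config_split !big_bool /= addrA. Qed.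

Lemma ising_Z_gt0 : 0 < Z.
Proof. by rewrite ising_ZE !addr_gt0 ?joint_mass_gt0. Qed.

Lemma ising_mass_Y y :
  ising_mass (fun c => c.1 == y) = joint_mass y true + joint_mass y false.
Proof.
rewrite /ising_mass (bigID (fun c : config m => c.2 i)) /=.
by congr (_ + _); apply: eq_bigl => c; rewrite andbC ?eqb_id ?eqbF_neg.
Qed.

Lemma cond_lam_given_YE b y :
  cond b y = joint_mass y b / (joint_mass y true + joint_mass y false).
Proof.
have Z_neq0 : Z != 0 by rewrite gt_eqF ?ising_Z_gt0.
have Y_neq0 : joint_mass y true + joint_mass y false != 0.
  by rewrite gt_eqF // addr_gt0 ?joint_mass_gt0.
rewrite /cond_lam_given_Y !ising_ProbE ising_mass_Y -/(joint_mass y b).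
by field; rewrite Y_neq0 Z_neq0.
Qed.

Lemma cond_lam_given_Y_negb b y : cond (~~ b) y = 1 - cond b y.
Proof.
have Y_neq0 : joint_mass y true + joint_mass y false != 0.
  by rewrite gt_eqF // addr_gt0 ?joint_mass_gt0.
by rewrite !cond_lam_given_YE; case: b => /=; field.
Qed.

Lemma cond_lam_given_Y_flip b y : cond (~~ b) (~~ y) = cond b y.
Proof.
set k := expR (- (2 * thY * spin y)).
have k_gt0 : 0 < k by rewrite expR_gt0.
have J_gt0 := joint_mass_gt0.
rewrite !cond_lam_given_YE (joint_mass_flip y false) (joint_mass_flip y true).
rewrite joint_mass_flip -/k; field.
by rewrite !gt_eqF ?addr_gt0 ?mulr_gt0.
Qed.

Lemma accuracyE : accuracy thY th thE E i =
  (joint_mass true true - joint_mass true false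
   - joint_mass false true + joint_mass false false) / Z.
Proof.
have class_sum y b : \sum_(c : config m | (c.2 i == b) && (c.1 == y))
    ising_P thY th thE E c * (spin (c.2 i) * spin c.1)
    = spin b * spin y * (joint_mass y b / Z).
  rewrite /joint_mass /ising_mass !mulr_suml mulr_sumr.
  by apply: eq_bigr => c /andP[/eqP-> /eqP->]; rewrite /ising_P mulrC.
by rewrite /accuracy sum_config_split !big_bool /= !class_sum /spin; ring.
Qed.

Lemma accuracy_cond : accuracy thY th thE E i = 2 * cond true true - 1.
Proof.
set k := expR (- (2 * thY * spin true)).
have k_gt0 : 0 < k by rewrite expR_gt0.
have J_gt0 := joint_mass_gt0.
rewrite accuracyE ising_ZE cond_lam_given_YE.
rewrite (joint_mass_flip true true) (joint_mass_flip true false) -/k; field.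
by rewrite !gt_eqF ?addr_gt0 ?mulr_gt0.
Qed.

End IsingFlipSymmetry.

Theorem lemma2 (R : realType) (m : nat) (thY : R) (th : 'I_m -> R)
    (thE : 'I_m -> 'I_m -> R) (E : {set 'I_m * 'I_m})
    (hE : forall e, e \in E -> (e.1 < e.2)%N) (i : 'I_m) :
  let a := accuracy thY th thE E i in
  [/\ cond_lam_given_Y thY th thE E i true true = (1 + a) / 2,
      cond_lam_given_Y thY th thE E i false false = (1 + a) / 2,
      cond_lam_given_Y thY th thE E i false true = (1 - a) / 2 &
      cond_lam_given_Y thY th thE E i true false = (1 - a) / 2].
Proof.
move=> a.
have flip := @cond_lam_given_Y_flip _ _ thY th thE E i.
have agree : cond_lam_given_Y thY th thE E i true true = (1 + a) / 2.
  by rewrite /a accuracy_cond; field.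
have disagree : cond_lam_given_Y thY th thE E i false true = (1 - a) / 2.
  by rewrite -[false]/(~~ true) cond_lam_given_Y_negb agree; field.
split=> //; first by rewrite -agree; exact: flip true true.
by rewrite -disagree; exact: flip false true.
Qed.
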